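(* Let $m\in\mathbb{N}$. (i) There exist curves $\sigma,\tau$ of complexity $m$ in Euclidean space and a parameter $k$ such that the lengths $|T_{(k\text{-}DTW)}|$ and $|T_{(DTW)}|$ of an optimal $k$-DTW traversal and an optimal DTW traversal of $\sigma$ and $\tau$ differ by an amount linear in $m$ (i.e., $\Omega(m)$); moreover, such instances exist both with $|T_{(k\text{-}DTW)}|<|T_{(DTW)}|$ and with $|T_{(k\text{-}DTW)}|>|T_{(DTW)}|$. (ii) Assume $m\ge 5$. Then for every $k$ with $1\le k\le 4\lfloor m/5\rfloor$ there exist curves $\sigma,\tau$ of complexity $m$ such that $d_{k\text{-}DTW}(\sigma,\tau)$ is not equal to the sum of the $k$ largest distances contributing to $d_{DTW}(\sigma,\tau)$ (i.e., the $k$ largest matched distances of a traversal realizing the DTW distance).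
   Context: Curves are vertex sequences in $\mathbb{R}^d$. For $\sigma=(v_1,\dots,v_{m'})$ and $\tau=(w_1,\dots,w_{m''})$ a traversal $T$ is a sequence of index pairs starting with $(1,1)$, ending with $(m',m'')$, where each $(i,j)$ is followed only by $(i+1,j)$, $(i,j+1)$ or $(i+1,j+1)$; $|T|$ is its number of pairs. The DTW distance is $d_{DTW}(\sigma,\tau)=\min_T\sum_{(i,j)\in T}\|v_i-w_j\|$. With $s^{(T)}_1\ge s^{(T)}_2\ge\dots$ the matched distances of $T$ sorted non-increasingly (padded with zeros beyond $|T|$), $d_{k\text{-}DTW}(\sigma,\tau)=\min_T\sum_{l=1}^k s^{(T)}_l$. An optimal DTW (resp. $k$-DTW) traversal is one attaining the respective minimum. *)

From mathcomp Require Import all_boot all_order all_algebra.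
From mathcomp Require Import classical_sets reals Rstruct.
Set Implicit Arguments. Unset Strict Implicit. Unset Printing Implicit Defensive.
Import Order.TTheory GRing.Theory Num.Theory.
Local Open Scope ring_scope.
Local Open Scope classical_set_scope.

Notation R := Rdefinitions.R.

(* A point of R^d is a row vector; a curve is a (nonempty) sequence of points;
   its complexity is its size. *)
Definition point (d : nat) := 'rV[R]_d.
Definition curve (d : nat) := seq (point d).

Definition edist (d : nat) (v w : point d) : R :=
  Num.sqrt (\sum_(i < d) (v ord0 i - w ord0 i) ^+ 2).

(* Traversals use 0-based indices: start (0,0), end (m'-1, m''-1). *)
Definition trav_step (p q : nat * nat) : bool :=
  [|| (q.1 == p.1.+1) && (q.2 == p.2),
      (q.1 == p.1) && (q.2 == p.2.+1) |
      (q.1 == p.1.+1) && (q.2 == p.2.+1)].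

Definition is_traversal (m1 m2 : nat) (T : seq (nat * nat)) : Prop :=
  exists rest, T = (0%N, 0%N) :: rest /\ (0 < m1)%N /\ (0 < m2)%N /\
    path trav_step (0%N, 0%N) rest /\ last (0%N, 0%N) rest = (m1.-1, m2.-1).

Definition matched (d : nat) (s t : curve d) (T : seq (nat * nat)) : seq R :=
  [seq edist (nth 0 s p.1) (nth 0 t p.2) | p <- T].

(* sum of the k largest entries (padding with zeros beyond |T| contributes 0) *)
Definition topk (k : nat) (l : seq R) : R :=
  \sum_(x <- take k (sort (fun x y : R => y <= x) l ++ nseq k 0)) x.

Definition dtw_cost (d : nat) (s t : curve d) T : R := \sum_(x <- matched s t T) x.
Definition kdtw_cost (k d : nat) (s t : curve d) T : R := topk k (matched s t T).

Definition d_DTW (d : nat) (s t : curve d) : R :=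
  inf [set dtw_cost s t T | T in [set T | is_traversal (size s) (size t) T]].
Definition d_kDTW (k d : nat) (s t : curve d) : R :=
  inf [set kdtw_cost k s t T | T in [set T | is_traversal (size s) (size t) T]].

Definition optimal_DTW (d : nat) (s t : curve d) T : Prop :=
  is_traversal (size s) (size t) T /\
  forall T', is_traversal (size s) (size t) T' -> dtw_cost s t T <= dtw_cost s t T'.
Definition optimal_kDTW (k d : nat) (s t : curve d) T : Prop :=
  is_traversal (size s) (size t) T /\
  forall T', is_traversal (size s) (size t) T' -> kdtw_cost k s t T <= kdtw_cost k s t T'.

From mathcomp Require Import all_boot all_order all_algebra.
From mathcomp Require Import classical_sets reals Rstruct.
From mathcomp Require Import zify ring lra.
Import Order.TTheory GRing.Theory Num.Theory.
Set Implicit Arguments. Unset Strict Implicit. Unset Printing Implicit Defensive.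
Local Open Scope ring_scope.

(* The cell (i, j) of the m x m grid carries the distance between the i-th
   vertices of the two curves, and a traversal is a monotone staircase path of
   cells from (0, 0) to (m - 1, m - 1). Both instances are analysed with
   potentials on the grid: if entering a cell q raises a potential by at most
   f(q), summing along a traversal bounds its f-cost from below, and a potential
   that strictly increases along a traversal bounds its length from above.

   In the first instance the diagonal has all distances at most 3 while every
   route off the diagonal crosses a cell of distance more than 3, so an optimal
   1-DTW traversal has length at most m + 1. The L-shaped route along the first
   row and the last column has total cost at most 2m + 1, whereas cost plus
   length is at least 4m - 6 for every traversal, so an optimal DTW traversal
   has length at least 2m - 7.

   In the second instance all distances are 2 or 3, and those equal to 2 form
   the L-shaped corridor. An optimal 1-DTW traversal stays in the corridor, so
   its length is at least 2m - 2, while an optimal DTW traversal T satisfies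
   2 |T| <= cost <= 3m (compare with the diagonal). Hence every optimal DTW
   traversal leaves the corridor, its k largest distances sum to at least
   2k + 1, and the corridor shows d_kDTW <= 2k, for every k < m. *)

Lemma sumr_one (V : pzSemiRingType) (I : Type) (r : seq I) :
  \sum_(i <- r) (1 : V) = (size r)%:R.
Proof. by rewrite -sum1_size natr_sum. Qed.

Lemma ler_sum_const (V : numDomainType) (I : eqType) (r : seq I) (F : I -> V) M :
  {in r, forall i, F i <= M} -> \sum_(i <- r) F i <= (size r)%:R * M.
Proof.
move=> F_le; rewrite -sumr_one mulr_suml big_seq [leRHS]big_seq.
by apply: ler_sum => i /F_le; rewrite mul1r.
Qed.

Lemma ger_sum_const (V : numDomainType) (I : eqType) (r : seq I) (F : I -> V) M :
  {in r, forall i, M <= F i} -> (size r)%:R * M <= \sum_(i <- r) F i.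
Proof.
move=> F_ge; rewrite -sumr_one mulr_suml big_seq [leRHS]big_seq.
by apply: ler_sum => i /F_ge; rewrite mul1r.
Qed.

Lemma trav_stepP p q : trav_step p q ->
  [\/ q = (p.1.+1, p.2), q = (p.1, p.2.+1) | q = (p.1.+1, p.2.+1)].
Proof.
case: p q => [a b] [c e]; rewrite /trav_step /=.
by case/or3P => /andP[/eqP-> /eqP->]; [apply: Or31 | apply: Or32 | apply: Or33].
Qed.

Lemma path_trav_step_le_last x s : path trav_step x s ->
  {in x :: s, forall y, (y.1 <= (last x s).1)%N && (y.2 <= (last x s).2)%N}.
Proof.
elim: s x => [|z s IH] x /=; first by move=> _ y; rewrite inE => /eqP->; rewrite !leqnn.
case/andP=> /trav_stepP xz /IH zs y; rewrite inE => /orP[/eqP->|]; last exact: zs.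
have /andP[] := zs z (mem_head _ _).
by case: xz => ->; rewrite /=; lia.
Qed.

Lemma mem_traversal m1 m2 T : is_traversal m1 m2 T ->
  {in T, forall p, (p.1 < m1)%N && (p.2 < m2)%N}.
Proof.
case=> s [-> [m1_gt0 [m2_gt0 [Ps last_s]]]] p /(path_trav_step_le_last Ps).
by rewrite last_s -(ltn_predK m1_gt0) -(ltn_predK m2_gt0) !ltnS.
Qed.

Lemma path_potential (V : numDomainType) (I : eqType) (e : rel I)
    (Phi f : I -> V) x s :
  path e x s -> {in x :: s &, forall p q, e p q -> Phi q - Phi p <= f q} ->
  Phi (last x s) - Phi x <= \sum_(y <- s) f y.
Proof.
elim: s x => [|z s IH] x /=; first by rewrite subrr big_nil.
case/andP=> ez Ps step; rewrite big_cons.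
have -> : Phi (last z s) - Phi x = (Phi z - Phi x) + (Phi (last z s) - Phi z).
  by ring.
apply: lerD; first by apply: step; rewrite ?inE ?eqxx ?orbT.
by apply: IH => // p q p_s q_s; apply: step; rewrite inE ?p_s ?q_s orbT.
Qed.

Lemma traversal_potential (V : numDomainType) m1 m2 T (Phi f : nat * nat -> V) :
  is_traversal m1 m2 T ->
  {in T &, forall p q, trav_step p q -> Phi q - Phi p <= f q} ->
  Phi (m1.-1, m2.-1) - Phi (0%N, 0%N) + f (0%N, 0%N) <= \sum_(p <- T) f p.
Proof.
case=> s [-> [_ [_ [Ps <-]]]] step.
rewrite big_cons [leLHS]addrC lerD2l.
exact: path_potential Ps step.
Qed.

Lemma traversal_size_gt_potential m1 m2 T (Phi : nat * nat -> int) :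
  is_traversal m1 m2 T ->
  {in T &, forall p q, trav_step p q -> Phi q <= Phi p + 1} ->
  Phi (m1.-1, m2.-1) - Phi (0%N, 0%N) < (size T)%:R.
Proof.
move=> T_trav step.
suff: Phi (m1.-1, m2.-1) - Phi (0%N, 0%N) + 1 <= (size T)%:R by lia.
rewrite -sumr_one; apply: (traversal_potential (f := fun=> 1) T_trav).
by move=> p q p_T q_T /(step p q p_T q_T); lia.
Qed.

Lemma traversal_size_le_potential m1 m2 T (Phi : nat * nat -> int) :
  is_traversal m1 m2 T ->
  {in T &, forall p q, trav_step p q -> Phi p < Phi q} ->
  (size T)%:R <= Phi (m1.-1, m2.-1) - Phi (0%N, 0%N) + 1.
Proof.
move=> T_trav step.
suff: - Phi (m1.-1, m2.-1) - - Phi (0%N, 0%N) + -1 <= - (size T)%:R by lia.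
rewrite -sumr_one -sumrN.
apply: (traversal_potential (Phi := fun p => - Phi p) (f := fun=> -1) T_trav).
by move=> p q p_T q_T /(step p q p_T q_T); lia.
Qed.

Lemma traversal_size_ge m1 m2 T : is_traversal m1 m2 T -> (m1 <= size T)%N.
Proof.
move=> T_trav; have m1_gt0 : (0 < m1)%N by case: T_trav => s [_ []].
suff : (m1.-1)%:Z - 0%:Z < (size T)%:R by lia.
apply: (traversal_size_gt_potential (Phi := fun p => p.1%:Z) T_trav).
by move=> p q _ _ /trav_stepP [] -> /=; lia.
Qed.

Lemma path_map_iota (I : Type) (e : rel I) (f : nat -> I) a n :
  (forall i, e (f i) (f i.+1)) -> path e (f a) [seq f i | i <- iota a.+1 n].
Proof. by move=> ef; elim: n a => //= n IH a; rewrite ef IH. Qed.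

Lemma last_map_iota (I : Type) (f : nat -> I) a n :
  last (f a) [seq f i | i <- iota a.+1 n] = f (a + n)%N.
Proof. by elim: n a => [|n IH] a /=; rewrite ?addn0 // IH addSnnS. Qed.

Definition diag_trav m := [seq (i, i) | i <- iota 0 m].

Definition corner_trav m :=
  [seq (0%N, j) | j <- iota 0 m.-1] ++ [seq (i, m.-1) | i <- iota 1 m.-1].

Lemma diag_trav_traversal m : (0 < m)%N -> is_traversal m m (diag_trav m).
Proof.
case: m => // n _; exists [seq (i, i) | i <- iota 1 n]; do 3!split => //.
split; last exact: (last_map_iota (fun i => (i, i)) 0).
by apply: (path_map_iota (f := fun i => (i, i))) => i; rewrite /trav_step !eqxx !orbT.
Qed.

Lemma corner_trav_traversal m : (1 < m)%N -> is_traversal m m (corner_trav m).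
Proof.
case: m => [|[|n]] // _.
exists ([seq (0%N, j) | j <- iota 1 n] ++ [seq (i, n.+1) | i <- iota 1 n.+1]).
do 3!split => //; rewrite cat_path last_cat (last_map_iota (fun j => (0%N, j))) /=.
split; last exact: (last_map_iota (fun i => (i, n.+1)) 1).
rewrite (path_map_iota (f := fun j => (0%N, j))) => [|j]; last by rewrite /trav_step !eqxx orbT.
rewrite (path_map_iota (f := fun i => (i, n.+1))) => [|i]; last by rewrite /trav_step !eqxx.
by rewrite /trav_step !eqxx !orbT.
Qed.

Lemma mem_corner_trav m p : p \in corner_trav m ->
  (p.1 = 0 /\ p.2 < m.-1 \/ 0 < p.1 /\ p.2 = m.-1)%N.
Proof.
by rewrite mem_cat => /orP[] /mapP[i]; rewrite mem_iota => i_lt -> /=; lia.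
Qed.

Local Notation geR := (fun x y : R => y <= x).

Lemma mem_topk_seq k l x :
  x \in take k (sort geR l ++ nseq k 0) -> x \in l \/ x = 0.
Proof.
move/mem_take; rewrite mem_cat mem_sort mem_nseq.
by case/orP=> [|/andP[_ /eqP]]; [left | right].
Qed.

Lemma topk_ge0 k l : {in l, forall x, 0 <= x} -> 0 <= topk k l.
Proof.
by move=> l_ge0; rewrite /topk big_seq; apply: sumr_ge0 => x /mem_topk_seq [/l_ge0|->].
Qed.

Lemma topk_le k l M : 0 <= M -> {in l, forall x, x <= M} -> topk k l <= k%:R * M.
Proof.
move=> M_ge0 l_le; apply: le_trans (ler_sum_const (M := M) _) _.
  by move=> x /mem_topk_seq [/l_le|->].
by rewrite ler_wpM2r // ler_nat size_take; case: ifP => // /negbT; rewrite -leqNgt.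
Qed.

Lemma topk_take_sort k l : (k <= size l)%N ->
  topk k l = \sum_(x <- take k (sort geR l)) x.
Proof.
move=> k_le; rewrite /topk take_cat size_sort; case: ltnP => // k_ge.
have -> : k = size l by apply/eqP; rewrite eqn_leq k_le k_ge.
by rewrite subnn take0 cats0 -(size_sort geR l) take_size.
Qed.

Lemma topk_ge k l a x : (0 < k <= size l)%N -> {in l, forall y, a <= y} -> x \in l ->
  (k.-1)%:R * a + x <= topk k l.
Proof.
case/andP=> k_gt0 k_le l_ge x_l; rewrite topk_take_sort //.
have : x \in sort geR l by rewrite mem_sort.
have : {in sort geR l, forall y, a <= y} by move=> y; rewrite mem_sort; apply: l_ge.
have := size_sort geR l; have := sort_sorted (fun y z => le_total z y) l.
case: (sort geR l) => [|h s] //= /(order_path_min (rev_trans le_trans)) /allP h_max.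
move=> size_s s_ge; rewrite inE => x_hs.
case: k k_gt0 k_le => // k _ k_le; rewrite /= big_cons addrC.
apply: lerD; first by case/orP: x_hs => [/eqP->|/h_max].
rewrite -[X in X%:R * a](@size_takel k _ s); last by rewrite -ltnS size_s.
by apply: ger_sum_const => y /mem_take y_s; apply: s_ge; rewrite inE y_s orbT.
Qed.

Definition cell_dist d (s t : curve d) (p : nat * nat) : R :=
  edist (nth 0 s p.1) (nth 0 t p.2).

Section CellDistances.
Variables (d : nat) (s t : curve d).

Lemma dtw_costE T : dtw_cost s t T = \sum_(p <- T) cell_dist s t p.
Proof. by rewrite /dtw_cost big_map. Qed.

Lemma matched_ge0 T : {in matched s t T, forall x, 0 <= x}.
Proof. by move=> x /mapP[p _ ->]; apply: sqrtr_ge0. Qed.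

Lemma d_kDTW_le k T :
  is_traversal (size s) (size t) T -> d_kDTW k s t <= kdtw_cost k s t T.
Proof.
move=> T_trav; apply: ge_inf; last by exists T.
by exists 0 => _ [T' _ <-]; apply/topk_ge0/matched_ge0.
Qed.

Lemma optimal_1DTW_cell_le T T' M :
  optimal_kDTW 1 s t T -> is_traversal (size s) (size t) T' ->
  {in T', forall p, cell_dist s t p <= M} -> {in T, forall p, cell_dist s t p <= M}.
Proof.
move=> [_ T_opt] T'_trav T'_le p p_T.
have M_ge0 : 0 <= M.
  case: T'_trav T'_le => r [-> _] /(_ _ (mem_head _ _)).
  by apply: le_trans; apply: sqrtr_ge0.
have p_le : cell_dist s t p <= kdtw_cost 1 s t T.
  have := topk_ge (k := 1) (a := 0) _ (@matched_ge0 T) (map_f (cell_dist s t) p_T).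
  by rewrite mul0r add0r; apply; rewrite size_map; case: (T) p_T.
apply: le_trans p_le (le_trans (T_opt _ T'_trav) _).
by rewrite -[M]mul1r; apply: topk_le => // _ /mapP[q q_T' ->]; apply: T'_le.
Qed.

Lemma optimal_DTW_size_le T T' a :
  optimal_DTW s t T -> is_traversal (size s) (size t) T' ->
  {in T, forall p, a <= cell_dist s t p} -> (size T)%:R * a <= dtw_cost s t T'.
Proof.
move=> [_ T_opt] T'_trav T_ge; apply: le_trans (T_opt _ T'_trav).
by rewrite dtw_costE; apply: ger_sum_const.
Qed.

End CellDistances.

Lemma edist_const_mx (a b : R) : edist (const_mx a : 'rV[R]_1) (const_mx b) = `|a - b|.
Proof. by rewrite /edist big_ord1 !mxE sqrtr_sqr. Qed.

Definition sB m : curve 1 := mkseq (fun i => const_mx (if i == 0%N then 0 else 5)) m.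
Definition tB m : curve 1 := mkseq (fun j => const_mx (if j == m.-1 then 3 else 2)) m.

Section InstanceB.
Variable m : nat.
Local Notation cB := (cell_dist (sB m) (tB m)).

Lemma size_sB : size (sB m) = m. Proof. exact: size_mkseq. Qed.
Lemma size_tB : size (tB m) = m. Proof. exact: size_mkseq. Qed.

Lemma cB_val i j : (i < m)%N -> (j < m)%N ->
  cB (i, j) = if (i == 0%N) == (j == m.-1) then 3 else 2.
Proof.
move=> i_lt j_lt; rewrite /cell_dist !nth_mkseq // edist_const_mx.
case: (i == 0%N); case: (j == m.-1) => /=;
  by [rewrite ler0_norm; lra | rewrite ger0_norm; lra].
Qed.

Lemma cB_bounds T : is_traversal m m T -> {in T, forall p, 2 <= cB p <= 3}.
Proof.
move=> T_trav [i j] /(mem_traversal T_trav) /andP[i_lt j_lt].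
by rewrite cB_val //; case: ifP => _; lra.
Qed.

Lemma cB_le2 i j : (i < m)%N -> (j < m)%N -> cB (i, j) <= 2 ->
  (i == 0%N) && (j < m.-1)%N || (0 < i)%N && (j == m.-1).
Proof.
move=> i_lt j_lt; rewrite cB_val //; case: ifP => [_|]; first lra.
by case: (i =P 0%N); case: (j =P m.-1) => //= *; lia.
Qed.

Lemma cB_corner : (1 < m)%N -> {in corner_trav m, forall p, cB p <= 2}.
Proof.
move=> m_gt1 [i j] p_c.
have /andP[i_lt j_lt] := mem_traversal (corner_trav_traversal m_gt1) p_c.
rewrite cB_val //; case/mem_corner_trav: p_c => /= [[-> j_lt']|[i_gt ->]].
  by have -> : (j == m.-1) = false by lia.
by rewrite eqxx; have -> : (i == 0%N) = false by lia.
Qed.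

Lemma cheap_traversal_sizeB T : is_traversal m m T ->
  {in T, forall p, cB p <= 2} -> (2 * m - 2 <= size T)%N.
Proof.
move=> T_trav T_cheap; have m_gt0 : (0 < m)%N by case: T_trav => s [_ []].
pose phi p := if p.1 == 0%N then p.2 else (p.1 + m - 2)%N.
suff : (phi (m.-1, m.-1))%:Z - (phi (0%N, 0%N))%:Z < (size T)%:R.
  by rewrite /phi /=; case: ifP; lia.
apply: (traversal_size_gt_potential (Phi := fun p => (phi p)%:Z) T_trav).
move=> [a b] [c e] p_T q_T step.
have /andP[a_lt b_lt] := mem_traversal T_trav p_T.
have /andP[c_lt e_lt] := mem_traversal T_trav q_T.
have := cB_le2 a_lt b_lt (T_cheap _ p_T); have := cB_le2 c_lt e_lt (T_cheap _ q_T).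
case/trav_stepP: step => /= [[-> ->]|[-> ->]|[-> ->]]; rewrite /phi /=;
  by repeat case: ifP; lia.
Qed.

Lemma optimal_DTW_sizeB T : optimal_DTW (sB m) (tB m) T -> (2 * size T <= 3 * m)%N.
Proof.
move=> T_opt; have [+ _] := T_opt; rewrite size_sB size_tB => T_trav.
have m_gt0 : (0 < m)%N by case: T_trav => s [_ []].
have diag_tr := diag_trav_traversal m_gt0.
have lb : (size T)%:R * 2 <= dtw_cost (sB m) (tB m) (diag_trav m).
  apply: (optimal_DTW_size_le T_opt); first by rewrite size_sB size_tB.
  by move=> p /(cB_bounds T_trav) /andP[].
have ub : dtw_cost (sB m) (tB m) (diag_trav m) <= (size (diag_trav m))%:R * 3.
  by rewrite dtw_costE; apply: ler_sum_const => p /(cB_bounds diag_tr) /andP[].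
rewrite size_map size_iota in ub.
by rewrite -(ler_nat R) !natrM; lra.
Qed.

Lemma optimal_DTW_expensiveB T : (5 <= m)%N -> optimal_DTW (sB m) (tB m) T ->
  exists2 p, p \in T & 2 < cB p.
Proof.
move=> m_ge5 T_opt; have [+ _] := T_opt; rewrite size_sB size_tB => T_trav.
apply/hasP; apply: contraT; rewrite -all_predC => /allP T_cheap.
have /cheap_traversal_sizeB : {in T, forall p, cB p <= 2}.
  by move=> p /T_cheap /=; rewrite -leNgt.
by move=> /(_ T_trav); have := optimal_DTW_sizeB T_opt; lia.
Qed.

Lemma optimal_1DTW_sizeB T : (1 < m)%N -> optimal_kDTW 1 (sB m) (tB m) T ->
  (2 * m - 2 <= size T)%N.
Proof.
move=> m_gt1 T_opt; have [+ _] := T_opt; rewrite size_sB size_tB => T_trav.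
apply: cheap_traversal_sizeB T_trav _; apply: (optimal_1DTW_cell_le T_opt) (cB_corner m_gt1).
by rewrite size_sB size_tB; apply: corner_trav_traversal.
Qed.

Lemma d_kDTW_lt_topkB k T : (5 <= m)%N -> (0 < k < m)%N -> optimal_DTW (sB m) (tB m) T ->
  d_kDTW k (sB m) (tB m) < topk k (matched (sB m) (tB m) T).
Proof.
move=> m_ge5 /andP[k_gt0 k_lt] T_opt; have [+ _] := T_opt; rewrite size_sB size_tB => T_trav.
have m_gt1 : (1 < m)%N by lia.
have d_le : d_kDTW k (sB m) (tB m) <= k%:R * 2.
  have corner_tr : is_traversal (size (sB m)) (size (tB m)) (corner_trav m).
    by rewrite size_sB size_tB; apply: corner_trav_traversal.
  apply: le_trans (d_kDTW_le k corner_tr) _.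
  by apply: topk_le => // _ /mapP[p /(cB_corner m_gt1) p_le ->].
have [p p_T p_exp] := optimal_DTW_expensiveB m_ge5 T_opt.
have l_ge2 : {in matched (sB m) (tB m) T, forall y, 2 <= y}.
  by move=> _ /mapP[q /(cB_bounds T_trav) /andP[q_ge _] ->].
have k_size : (0 < k <= size (matched (sB m) (tB m) T))%N.
  by rewrite size_map k_gt0 (leq_trans (ltnW k_lt) (traversal_size_ge T_trav)).
have := topk_ge k_size l_ge2 (map_f (cell_dist (sB m) (tB m)) p_T).
by rewrite -[k in k%:R](prednK k_gt0) -natr1 in d_le; lra.
Qed.

End InstanceB.

Lemma sqrtr_le_sqr (x y : R) : 0 <= y -> (Num.sqrt x <= y) = (x <= y ^+ 2).
Proof. by move=> y_ge0; rewrite -{1}(ger0_norm y_ge0) -sqrtr_sqr ler_sqrt // sqr_ge0. Qed.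

Lemma sqr_le_sqrtr (x y : R) : 0 <= y -> y ^+ 2 <= x -> y <= Num.sqrt x.
Proof. by move=> y_ge0 /ler_wsqrtr; rewrite sqrtr_sqr ger0_norm. Qed.

Definition pt d (a : R) (i : nat) (b : R) : 'rV[R]_d :=
  \row_(k < d) (a * (k == 0%N :> nat)%:R + b * (k == i :> nat)%:R).

Lemma sum_indicator d i (x : R) : (i < d)%N -> \sum_(k < d) ((k == i :> nat)%:R * x) = x.
Proof.
move=> i_lt; rewrite (bigD1 (Ordinal i_lt)) //= eqxx mul1r big1 ?addr0 // => k k_neq.
rewrite (_ : (k == i :> nat) = false) ?mul0r //.
by apply/negbTE; apply: contra k_neq => /eqP k_i; apply/eqP/val_inj.
Qed.

Lemma edist_pt d a i b c j e : (0 < i < d)%N -> (0 < j < d)%N ->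
  edist (pt d a i b) (pt d c j e) =
  Num.sqrt ((a - c) ^+ 2 + (if i == j then (b - e) ^+ 2 else b ^+ 2 + e ^+ 2)).
Proof.
move=> i_lt j_lt; rewrite /edist; congr Num.sqrt.
transitivity (\sum_(k < d) ((k == 0%N :> nat)%:R * (a - c) ^+ 2 +
   (k == i :> nat)%:R * (if i == j then (b - e) ^+ 2 else b ^+ 2) +
   (k == j :> nat)%:R * (if i == j then 0 else e ^+ 2))).
  apply: eq_bigr => k _; rewrite !mxE; move: (nat_of_ord k) => n.
  case: (n =P 0%N) => ?; case: (n =P i) => ?; case: (n =P j) => ?;
    by case: (i =P j) => ? /=; try lia; ring.
by rewrite !big_split /= !sum_indicator //; [case: (i == j); ring | lia..].
Qed.

(* s = (0, 3e_0 + e_1, ..., 3e_0 + e_(m-2), 3e_0) and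
   t = (0, 3e_0 + 4e_1, e_2, ..., e_(m-2), 3e_0): the diagonal costs at most 3,
   the first row and the last column cost at most 1 except for the cell (0, 1)
   of cost 5, and every other cell costs more than 3. *)
Definition sA m : curve m := mkseq (fun i =>
  if i == 0%N then pt m 0 1 0 else if i == m.-1 then pt m 3 1 0 else pt m 3 i 1) m.
Definition tA m : curve m := mkseq (fun j =>
  if j == 0%N then pt m 0 1 0 else if j == 1%N then pt m 3 1 4
  else if j == m.-1 then pt m 3 1 0 else pt m 0 j 1) m.

Definition sqdistA m i j : R :=
  if i == 0%N then
    (if j == 0%N then 0 else if j == 1%N then 25 else if j == m.-1 then 9 else 1)
  else if i == m.-1 then
    (if j == 0%N then 9 else if j == 1%N then 16 else if j == m.-1 then 0 else 10)
  else
    (if j == 0%N then 10 else if j == 1%N then (if i == 1%N then 9 else 17)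
     else if j == m.-1 then 1 else if i == j then 9 else 11).

Section InstanceA.
Variable m : nat.
Hypothesis m_ge7 : (7 <= m)%N.
Local Notation cA := (cell_dist (sA m) (tA m)).

Lemma size_sA : size (sA m) = m. Proof. exact: size_mkseq. Qed.
Lemma size_tA : size (tA m) = m. Proof. exact: size_mkseq. Qed.

Lemma cA_val i j : (i < m)%N -> (j < m)%N -> cA (i, j) = Num.sqrt (sqdistA m i j).
Proof.
move=> i_lt j_lt; rewrite /cell_dist /= !nth_mkseq // /sqdistA.
repeat case: ifP => ?; rewrite edist_pt; try lia; congr Num.sqrt;
  rewrite ?eqxx; repeat case: ifP => ?; try lia; ring.
Qed.

Lemma cA_diag : {in diag_trav m, forall p, cA p <= 3}.
Proof.
move=> _ /mapP[i /[!mem_iota] i_lt ->]; rewrite cA_val // sqrtr_le_sqr // /sqdistA eqxx.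
by repeat case: ifP => ?; try lia; lra.
Qed.

Lemma cA_le3 i j : (i < m)%N -> (j < m)%N -> cA (i, j) <= 3 ->
  [|| (i == 0%N) && (j != 1%N), j == m.-1, i == j | (i == m.-1) && (j == 0%N)].
Proof.
move=> i_lt j_lt; rewrite cA_val // sqrtr_le_sqr // /sqdistA.
by repeat case: ifP => ?; try lia; lra.
Qed.

Lemma cheap_traversal_sizeA T : is_traversal m m T ->
  {in T, forall p, cA p <= 3} -> (size T <= m.+1)%N.
Proof.
move=> T_trav T_cheap.
(* The only cheap step out of (0, 0) is onto the diagonal, which can only be
   left towards the last column; phi numbers the cheap cells in that order. *)
pose phi p := if p.1 == 0%N then (if p.2 == 0%N then 2 * m else p.2)%N
  else if p.2 == m.-1 then (if p.1 == m.-1 then 3 * m else p.1 + 1 + 2 * m)%N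
  else if p.1 == p.2 then (p.1 + 2 * m)%N else 0%N.
suff : (size T)%:R <= (phi (m.-1, m.-1))%:Z - (phi (0%N, 0%N))%:Z + 1.
  by rewrite /phi /= eqxx; case: ifP; lia.
apply: (traversal_size_le_potential (Phi := fun p => (phi p)%:Z) T_trav).
move=> [a b] [c e] p_T q_T step.
have /andP[a_lt b_lt] := mem_traversal T_trav p_T.
have /andP[c_lt e_lt] := mem_traversal T_trav q_T.
have := cA_le3 a_lt b_lt (T_cheap _ p_T); have := cA_le3 c_lt e_lt (T_cheap _ q_T).
move: c_lt e_lt; case/trav_stepP: step => /= [[-> ->]|[-> ->]|[-> ->]]; rewrite /phi /=;
  by repeat case: ifP; lia.
Qed.

Definition weightA (p : nat * nat) : nat :=
  if (0 < p.1)%N && (p.2 < m.-1)%N then 4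
  else if (p == (0, 0)) || (p == (m.-1, m.-1)) then 1 else 2.

Lemma cA_weight i j : (i < m)%N -> (j < m)%N -> (weightA (i, j))%:R <= cA (i, j) + 1.
Proof.
move=> i_lt j_lt; have cA_ge0 : 0 <= cA (i, j) by apply: sqrtr_ge0.
rewrite /weightA /= !xpair_eqE.
case: ifP => [/andP[i_gt0 j_lt'] | _].
  suff : 3 <= cA (i, j) by lra.
  rewrite cA_val //; apply: sqr_le_sqrtr => //; rewrite /sqdistA.
  by repeat case: ifP => ?; try lia; lra.
case: ifP => [_ | corner]; first lra.
suff : 1 <= cA (i, j) by lra.
rewrite cA_val //; apply: sqr_le_sqrtr => //; rewrite /sqdistA; move: corner.
by repeat case: ifP => ?; try lia; lra.
Qed.

Lemma cA00 : cA (0, 0)%N = 0.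
Proof. by rewrite cA_val /sqdistA /= ?sqrtr0 //; lia. Qed.

Lemma traversal_cost_size_geA T : is_traversal m m T ->
  4 * m%:R - 6 <= dtw_cost (sA m) (tA m) T + (size T)%:R.
Proof.
move=> T_trav.
(* Away from the last column phi is 2 (i + j), which no step raises by more
   than the weight of the cell entered; on the last column it is lowered so that
   entering it from the interior stays within the weight 2. *)
pose phi p := if (p.1 == m.-1) && (p.2 == m.-1) then (4 * m - 7)%N
  else if p.2 == m.-1 then (2 * p.1 + 2 * m - 4)%N else (2 * (p.1 + p.2))%N.
suff : (phi (m.-1, m.-1))%:R - (phi (0%N, 0%N))%:R + (cA (0%N, 0%N) + 1) <=
    \sum_(p <- T) (cA p + 1).
  rewrite big_split sumr_one -dtw_costE cA00 /phi /= !eqxx.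
  have -> : (0 == m.-1)%N = false by lia.
  by rewrite natrB ?natrM; [lra | lia].
apply: (traversal_potential (Phi := fun p => (phi p)%:R) (f := fun p => cA p + 1) T_trav).
move=> -[a b] [c e] p_T q_T step.
have /andP[c_lt e_lt] := mem_traversal T_trav q_T.
apply: le_trans (cA_weight c_lt e_lt); rewrite lerBlDl -natrD ler_nat.
move: c_lt e_lt; case/trav_stepP: step => /= [[-> ->]|[-> ->]|[-> ->]];
  rewrite /phi /weightA /= !xpair_eqE; by repeat case: ifP; lia.
Qed.

Lemma corner_costA : dtw_cost (sA m) (tA m) (corner_trav m) <= 2 * m%:R + 1.
Proof.
pose rest := [seq (0%N, j) | j <- iota 2 (m - 3)] ++ [seq (i, m.-1) | i <- iota 1 m.-1].
have -> : corner_trav m = (0, 0)%N :: (0, 1)%N :: rest.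
  by rewrite /corner_trav {1}(_ : m.-1 = (m - 3).+2) //; lia.
rewrite dtw_costE !big_cons cA00 add0r.
have c01 : cA (0, 1)%N <= 5.
  by rewrite cA_val ?sqrtr_le_sqr /sqdistA /=; try lia; lra.
have : \sum_(p <- rest) cA p <= (size rest)%:R * 1.
  apply: ler_sum_const => _ /[!mem_cat] /orP[] /mapP[k] /[!mem_iota] k_lt ->;
  rewrite cA_val ?sqrtr_le_sqr /sqdistA /=; try lia; try lra;
  by repeat case: ifP => ?; try lia; lra.
rewrite size_cat !size_map !size_iota mulr1 => rest_le.
have : (m - 3 + m.-1 + 4)%N%:R = (2 * m)%N%:R :> R by congr (_%:R); lia.
by rewrite natrD in rest_le; rewrite !natrD; lra.
Qed.

Lemma optimal_DTW_sizeA T : optimal_DTW (sA m) (tA m) T -> (2 * m - 7 <= size T)%N.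
Proof.
case; rewrite size_sA size_tA => T_trav T_opt.
have m_gt1 : (1 < m)%N by lia.
have := le_trans (T_opt _ (corner_trav_traversal m_gt1)) corner_costA.
have := traversal_cost_size_geA T_trav.
rewrite -(ler_nat R) natrB ?natrM; [lra | lia].
Qed.

Lemma optimal_1DTW_sizeA T : optimal_kDTW 1 (sA m) (tA m) T -> (size T <= m.+1)%N.
Proof.
move=> T_opt; have [+ _] := T_opt; rewrite size_sA size_tA => T_trav.
apply: cheap_traversal_sizeA T_trav _; apply: (optimal_1DTW_cell_le T_opt) cA_diag.
by rewrite size_sA size_tA; apply: diag_trav_traversal; lia.
Qed.

End InstanceA.

Theorem lemmaA4 :
  (* (i), instances with |T_kDTW| < |T_DTW|, gap Omega(m) *)
  (exists c : R, 0 < c /\ exists m0 : nat, forall m : nat, (m0 <= m)%N ->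
     exists (d : nat) (s t : curve d) (k : nat),
       size s = m /\ size t = m /\ (1 <= k)%N /\
       forall T1 T2, optimal_kDTW k s t T1 -> optimal_DTW s t T2 ->
         (size T1)%:R + c * m%:R <= (size T2)%:R) /\
  (* (i), instances with |T_kDTW| > |T_DTW|, gap Omega(m) *)
  (exists c : R, 0 < c /\ exists m0 : nat, forall m : nat, (m0 <= m)%N ->
     exists (d : nat) (s t : curve d) (k : nat),
       size s = m /\ size t = m /\ (1 <= k)%N /\
       forall T1 T2, optimal_kDTW k s t T1 -> optimal_DTW s t T2 ->
         (size T2)%:R + c * m%:R <= (size T1)%:R) /\
  (* (ii) *)
  (forall m : nat, (5 <= m)%N -> forall k : nat, (1 <= k <= 4 * (m %/ 5))%N ->
     exists (d : nat) (s t : curve d),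
       size s = m /\ size t = m /\
       forall T, optimal_DTW s t T -> d_kDTW k s t <> topk k (matched s t T)).
Proof.
split; [|split].
- exists (1/2); split; first lra.
  exists 16%N => m m_ge16; exists m, (sA m), (tA m), 1%N.
  rewrite size_sA size_tA; do 3?split => //.
  move=> T1 T2 T1_opt T2_opt.
  have m_ge7 : (7 <= m)%N by lia.
  have T1_le := optimal_1DTW_sizeA m_ge7 T1_opt.
  have T2_ge := optimal_DTW_sizeA m_ge7 T2_opt.
  have : (2 * size T1 + m <= 2 * size T2)%N by lia.
  by rewrite -(ler_nat R) natrD !natrM; lra.
- exists (1/4); split; first lra.
  exists 8%N => m m_ge8; exists 1%N, (sB m), (tB m), 1%N.
  rewrite size_sB size_tB; do 3?split => //.
  move=> T1 T2 T1_opt T2_opt.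
  have m_gt1 : (1 < m)%N by lia.
  have T1_ge := optimal_1DTW_sizeB m_gt1 T1_opt.
  have T2_le := optimal_DTW_sizeB T2_opt.
  have : (4 * size T2 + m <= 4 * size T1)%N by lia.
  by rewrite -(ler_nat R) natrD !natrM; lra.
- move=> m m_ge5 k /andP[k_gt0 k_le]; exists 1%N, (sB m), (tB m).
  rewrite size_sB size_tB; do 2?split => //.
  move=> T T_opt.
  have k_lt : (0 < k < m)%N by lia.
  by move=> E; have := d_kDTW_lt_topkB m_ge5 k_lt T_opt; rewrite E ltxx.
Qed.
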